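(* Let $q$ be a prime power, let $n=m$, let $d\le n$ be even, and let $\tau=d/2$. Then there exist a code $\mathcal C\subseteq\mathbb F_{q^m}^n$ with minimum rank distance exactly $d$ and a word $\mathbf r\in\mathbb F_{q^m}^n$ such that $|\mathcal C\cap\mathcal B_\tau(\mathbf r)|\ge q^{n-\tau}$.
   Context: Fixing a basis of $\mathbb F_{q^m}$ over $\mathbb F_q$, each vector in $\mathbb F_{q^m}^n$ is identified with an $m\times n$ matrix over $\mathbb F_q$; $\mathrm{rk}$ denotes its rank. The minimum rank distance of $\mathcal C$ is $\min\{\mathrm{rk}(\mathbf c_1-\mathbf c_2):\mathbf c_1\ne\mathbf c_2\in\mathcal C\}$, and $\mathcal B_\tau(\mathbf r)=\{\mathbf x:\mathrm{rk}(\mathbf x-\mathbf r)\le\tau\}$. Codes need not be linear. *)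

From mathcomp Require Import all_boot all_order all_algebra all_field.
Set Implicit Arguments. Unset Strict Implicit. Unset Printing Implicit Defensive.
Import GRing.Theory.
Local Open Scope ring_scope.

Section RankMetric.
Variables (F : finFieldType) (L : fieldExtType F) (n : nat).

Definition vec_to_mx (x : 'rV[L]_n) : 'M[F]_(\dim {:L}, n) :=
  \matrix_(i, j) coord (vbasis {:L}) i (x 0 j).

Definition rk (x : 'rV[L]_n) : nat := \rank (vec_to_mx x).

(* minimum rank distance of a (finite, possibly nonlinear) code C, given as a
   duplicate-free list, equals d *)
Definition min_rank_dist_eq (C : seq 'rV[L]_n) (d : nat) : Prop :=
  (exists c1 c2, [/\ c1 \in C, c2 \in C, c1 != c2 & rk (c1 - c2) = d]) /\
  (forall c1 c2, c1 \in C -> c2 \in C -> c1 != c2 -> (d <= rk (c1 - c2))%N).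

Definition rk_ball (tau : nat) (r : 'rV[L]_n) : pred 'rV[L]_n :=
  fun x => (rk (x - r) <= tau)%N.

End RankMetric.

From mathcomp Require Import all_boot all_order all_algebra all_field.
From mathcomp Require Import fingroup cyclic.
Set Implicit Arguments. Unset Strict Implicit. Unset Printing Implicit Defensive.
Import GRing.Theory FinRing.Theory.
Local Open Scope ring_scope.

(* Put s = n - tau >= tau and let E be the field with q^s elements.  For c in E
   let U_c be the s x tau matrix of x |-> c x restricted to a tau-dimensional
   F_q-subspace; U_c - U_c' = U_(c - c') has rank tau whenever c <> c'.  With
   A_c = [I; U_c], the n x n matrices A_c A_c^T have rank at most tau, so all
   q^s of them lie in the ball of radius tau around 0, while
   A_c A_c^T - A_c' A_c'^T = [A_c, -A_c'] [A_c, A_c']^T has rank 2 tau because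
   the columns of A_c and A_c' are jointly independent. *)

Section FiniteFieldExtension.
Variable F : finFieldType.

(* Lagrange's theorem in the additive group of F. *)
Lemma natr_card_finField : (#|F|%:R : F) = 0.
Proof. by have := @expg_cardG _ [set: F]%G (1 : F)%R; rewrite inE cardsT zmodXgE => ->. Qed.

Lemma card_finFieldExt (E : fieldExtType F) :
  #|FinFieldExtType E| = (#|F| ^ \dim {:E})%N.
Proof.
have := @card_vspace F (FinFieldExtType E) (Vector.class (FinSplittingFieldType F E)).
by move/(_ fullv); rewrite card_vspacef.
Qed.

Variable s : nat.
Hypothesis s_gt0 : (0 < s)%N.
Let Q := (#|F| ^ s)%N.

Let Q_gt1 : (1 < Q)%N.
Proof. by rewrite (ltn_exp2l 0) ?finNzRing_gt1. Qed.

Let Q1_gt0 : (0 < Q.-1)%N.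
Proof. by rewrite -ltnS prednK // ltnW. Qed.

Let XQ_sub_X_factor (R : nzRingType) :
  ('X^Q - 'X : {poly R}) = ('X^(Q.-1) - 1) * ('X - 0%:P).
Proof. by rewrite subr0 mulrBl mul1r -exprSr prednK // ltnW. Qed.

(* The roots of X^Q - X are distinct and are the fixed points of the s-th power
   of the Frobenius automorphism, so they form a subfield, which is all of L. *)
Lemma card_splittingField_XQ_sub_X (L : splittingFieldType F) :
  splittingFieldFor 1 ('X^Q - 'X : {poly L}) fullv -> #|FinFieldExtType L| = Q.
Proof.
move=> [zs DqL defL].
have /finField_galois_generator[/= a _ Da]: (1 <= {:L})%VS by apply: sub1v.
rewrite dimv1 expn1 in Da.
have natrQ : (Q%:R : L) = 0.
  by rewrite natrX -(rmorph_nat (in_alg L)) natr_card_finField rmorph0 expr0n gtn_eqF.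
have uniq_zs : uniq zs.
  rewrite -separable_prod_XsubC -(eqp_separable DqL) XQ_sub_X_factor.
  rewrite separable_root andbC /root !hornerE subr_eq0 eq_sym expr0n gtn_eqF //.
  have natrQ1 : (Q.-1%:R : L) != 0.
    by rewrite -subn1 natrB ?subr_eq0 ?natrQ 1?eq_sym ?oner_eq0 // ltnW.
  by rewrite oner_eq0 cyclotomic.separable_Xn_sub_1.
pose Fix := fixedSpace (a ^+ s)%g.
have zs_fixed : zs =i Fix.
  move=> z; rewrite -root_prod_XsubC -(eqp_root DqL) (sameP fixedSpaceP eqP).
  rewrite /root !hornerE subr_eq0 /= /Q; congr (_ == z).
  elim: (s) => [|i IHi]; first by rewrite gal_id.
  by rewrite expgSr expnSr exprM IHi galM ?Da ?memvf.
have Fix_full : Fix = {:L}%VS.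
  apply/eqP; rewrite eqEsubv subvf -defL -[Fix]subfield_closed agenvS //.
  by rewrite subv_add sub1v; apply/span_subvP => z; rewrite zs_fixed.
have /eq_card-> : FinFieldExtType L =i zs.
  by move=> z; rewrite zs_fixed Fix_full memvf.
apply: succn_inj; rewrite (card_uniqP _) //= -(size_prod_XsubC _ id).
by rewrite -(eqp_size DqL) size_polyDl size_polyXn // size_polyN size_polyX.
Qed.

Lemma fieldExt_of_dim : {E : fieldExtType F | \dim {:E} = s}.
Proof.
have /FinSplittingFieldFor[/= L splitL] : ('X^Q - 'X : {poly F}) != 0.
  by rewrite XQ_sub_X_factor monic_neq0 ?rpredM ?monicXsubC ?monicXnsubC.
rewrite rmorphB rmorphXn /= map_polyX in splitL.
exists L; apply/eqP; rewrite -(eqn_exp2l _ _ (finNzRing_gt1 F)) -card_finFieldExt.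
by rewrite (card_splittingField_XQ_sub_X splitL).
Qed.

End FiniteFieldExtension.

Section MultiplicationMatrix.
Variables (F : fieldType) (E : fieldExtType F).
Local Notation b := (vbasis {:E}).

Definition lmul_mx (c : E) : 'M[F]_(\dim {:E}) :=
  \matrix_(i, j) coord b i (c * b`_j).

Lemma lmul_mxB c c' : lmul_mx (c - c') = lmul_mx c - lmul_mx c'.
Proof. by apply/matrixP => i j; rewrite !mxE mulrBl linearB. Qed.

Lemma lmul_mx_unit c : c != 0 -> lmul_mx c \in unitmx.
Proof.
move=> nz_c; rewrite -unitmx_tr -row_free_unit; apply: inj_row_free => v /rowP vM0.
pose x := \sum_j v 0 j *: b`_j.
have cx0 : c * x = 0.
  rewrite (coord_vbasis (memvf (c * x))); apply: big1 => i _.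
  suff -> : coord b i (c * x) = 0 by rewrite scale0r.
  have := vM0 i; rewrite !mxE => <-.
  rewrite /x mulr_sumr linear_sum /=.
  by apply: eq_bigr => j _; rewrite !mxE -scalerAr linearZ.
have x0 : x = 0 by apply: (mulfI nz_c); rewrite cx0 mulr0.
apply/rowP => j; rewrite mxE.
have := coord_sum_free (fun j => v 0 j) j (basis_free (vbasisP {:E})).
by rewrite -/x x0 linear0.
Qed.

Definition lmul_cols (t : nat) (c : E) : 'M[F]_(\dim {:E}, t) :=
  lmul_mx c *m pid_mx t.

Lemma lmul_colsB t c c' : lmul_cols t (c - c') = lmul_cols t c - lmul_cols t c'.
Proof. by rewrite /lmul_cols lmul_mxB mulmxBl. Qed.

Lemma rank_lmul_cols t c :
  (t <= \dim {:E})%N -> c != 0 -> \rank (lmul_cols t c) = t.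
Proof.
move=> le_t nz_c; rewrite -mxrank_tr trmx_mul mxrankMfree ?mxrank_tr ?rank_pid_mx //.
by rewrite row_free_unit unitmx_tr lmul_mx_unit.
Qed.

End MultiplicationMatrix.

Section GraphProduct.
Variables (K : fieldType) (t s : nat).
Implicit Types U V : 'M[K]_(s, t).

Definition graph_mx U : 'M[K]_(t + s, t) := col_mx 1%:M U.
Definition graph_prod_mx U : 'M[K]_(t + s) := graph_mx U *m (graph_mx U)^T.

Lemma rank_graph_prod_mx U : (\rank (graph_prod_mx U) <= t)%N.
Proof. exact: leq_trans (mxrankM_maxl _ _) (rank_leq_col _). Qed.

Lemma graph_mx_tr_indep U V : \rank (U - V) = t -> forall v1 v2 : 'rV_t,
  v1 *m (graph_mx U)^T + v2 *m (graph_mx V)^T = 0 -> v1 = 0 /\ v2 = 0.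
Proof.
move=> rUV v1 v2; rewrite !tr_col_mx !trmx1 !mul_mx_row !mulmx1 add_row_mx.
rewrite -row_mx0 => /eq_row_mx [v12 v1UV].
have v2E : v2 = - v1 by apply/eqP; rewrite -addr_eq0 addrC v12.
rewrite v2E mulNmx -mulmxBr -linearB /= in v1UV.
have free_UV : row_free (U - V)^T by rewrite /row_free mxrank_tr rUV.
have v10 : v1 = 0 by apply: (row_free_inj free_UV); rewrite v1UV mul0mx.
by rewrite v2E v10 oppr0.
Qed.

Lemma graph_prod_mxB U V : graph_prod_mx U - graph_prod_mx V =
  row_mx (graph_mx U) (- graph_mx V) *m (row_mx (graph_mx U) (graph_mx V))^T.
Proof. by rewrite tr_row_mx mul_row_col mulNmx. Qed.

Lemma rank_graph_prod_mxB U V :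
  \rank (U - V) = t -> \rank (graph_prod_mx U - graph_prod_mx V) = (t + t)%N.
Proof.
move=> rUV; rewrite graph_prod_mxB mxrankMfree; last first.
  apply: inj_row_free => v; rewrite tr_row_mx -[v]hsubmxK mul_row_col.
  by move=> /(graph_mx_tr_indep rUV) [-> ->]; rewrite row_mx0.
rewrite -mxrank_tr tr_row_mx; apply/eqP; rewrite -/(row_free _).
apply: inj_row_free => v.
rewrite -[v]hsubmxK mul_row_col linearN /= mulmxN -mulNmx.
by move=> /(graph_mx_tr_indep rUV) [-> /eqP]; rewrite oppr_eq0 => /eqP ->; rewrite row_mx0.
Qed.

End GraphProduct.

Lemma mxrank_castmx (K : fieldType) m1 n1 m2 n2 (e : (m1 = m2) * (n1 = n2))
  (A : 'M[K]_(m1, n1)) : \rank (castmx e A) = \rank A.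
Proof. by case: e => e1 e2; case: m2 / e1; case: n2 / e2; rewrite castmx_id. Qed.

Lemma castmxB (K : zmodType) m1 n1 m2 n2 (e : (m1 = m2) * (n1 = n2))
  (A B : 'M[K]_(m1, n1)) : castmx e (A - B) = castmx e A - castmx e B.
Proof. by apply/matrixP => i j; rewrite !(castmxE, mxE). Qed.

Section WordsOfMatrices.
Variables (F : finFieldType) (L : fieldExtType F) (n : nat).

Definition mx_to_vec (M : 'M[F]_(\dim {:L}, n)) : 'rV[L]_n :=
  \row_j \sum_i M i j *: (vbasis {:L})`_i.

Lemma mx_to_vecK : cancel mx_to_vec (@vec_to_mx F L n).
Proof.
move=> M; apply/matrixP => i j; rewrite !mxE.
exact: coord_sum_free (basis_free (vbasisP {:L})).
Qed.

Lemma vec_to_mxB (x y : 'rV[L]_n) : vec_to_mx (x - y) = vec_to_mx x - vec_to_mx y.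
Proof. by apply/matrixP => i j; rewrite !mxE linearB. Qed.

Lemma rk_mx_to_vecB M M' : rk (mx_to_vec M - mx_to_vec M') = \rank (M - M').
Proof. by rewrite /rk vec_to_mxB !mx_to_vecK. Qed.

Lemma equidistant_code (T : finType) (w : T -> 'rV[L]_n) d :
  (0 < d)%N -> (forall c c', c != c' -> rk (w c - w c') = d) ->
  (1 < #|T|)%N ->
  uniq [seq w c | c <- enum T] /\ min_rank_dist_eq [seq w c | c <- enum T] d.
Proof.
move=> d_gt0 dist_w card_T.
have w_inj : injective w.
  move=> c c' w_cc'; apply/eqP/negPn/negP => /dist_w.
  by rewrite w_cc' /rk vec_to_mxB subrr mxrank0 => d0; rewrite -d0 in d_gt0.
split; first by rewrite (map_inj_uniq w_inj) enum_uniq.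
split=> [|_ _ /mapP[c _ ->] /mapP[c' _ ->]]; last by rewrite (inj_eq w_inj) => /dist_w ->.
have [c [c' [_ _ ne_cc']]] := card_gt1P card_T.
by exists (w c), (w c'); rewrite !map_f ?mem_enum // (inj_eq w_inj) dist_w.
Qed.

End WordsOfMatrices.

Theorem corollary3 (F : finFieldType) (L : fieldExtType F) (m n d : nat) :
  \dim {:L} = m -> m = n ->
  (0 < d)%N -> ~~ odd d -> (d <= n)%N ->
  exists (C : seq 'rV[L]_n) (r : 'rV[L]_n),
    [/\ uniq C, min_rank_dist_eq C d &
        (#|F| ^ (n - d./2) <= count (rk_ball (d./2) r) C)%N].
Proof.
move=> dimL <- d_gt0 even_d le_dm; set t := d./2.
have d_tt : d = (t + t)%N by rewrite addnn -{1}(odd_double_half d) (negbTE even_d).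
have le_tt_m : (t + t <= m)%N by rewrite -d_tt.
have le_t_m : (t <= m)%N := leq_trans (leq_addr t t) le_tt_m.
have le_t_mt : (t <= m - t)%N by rewrite leq_subRL.
have t_gt0 : (0 < t)%N by move: d_gt0; rewrite d_tt addn_gt0 orbb.
have [E dimE] := fieldExt_of_dim F (leq_trans t_gt0 le_t_mt).
have dims_m : (t + \dim {:E} = m)%N by rewrite dimE subnKC.
pose w (c : FinFieldExtType E) : 'rV[L]_m :=
  mx_to_vec (castmx (etrans dims_m (esym dimL), dims_m) (graph_prod_mx (lmul_cols t c))).
have dist_w c c' : c != c' -> rk (w c - w c') = d.
  move=> ne_cc'; rewrite rk_mx_to_vecB -castmxB mxrank_castmx d_tt rank_graph_prod_mxB //.
  by rewrite -lmul_colsB rank_lmul_cols ?dimE // subr_eq0.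
have [uniq_C dist_C] := equidistant_code d_gt0 dist_w (finNzRing_gt1 (FinFieldExtType E)).
exists [seq w c | c <- enum (FinFieldExtType E)], 0; split => //.
rewrite (@eq_in_count _ _ predT) => [|_ /mapP[c _ ->]]; last first.
  by rewrite /rk_ball subr0 /rk mx_to_vecK mxrank_castmx rank_graph_prod_mx.
by rewrite count_predT size_map -cardE card_finFieldExt dimE.
Qed.
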